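(* For $\kappa\in\mathbb{R}$ and $b>0$ define $$\ell(\kappa;b)=\sum_{n\in\mathbb{Z}}\ \sup_{y\in[0,1]}\ \frac{b}{(y+n+\kappa)^2+b^2}.$$ Then for each $b>0$ the function $\kappa\mapsto\ell(\kappa;b)$ is $\mathbb{Z}$-periodic and $$\sup_{\kappa\in\mathbb{R}}\ell(\kappa;b)\le\pi\Big(1+\frac1b\Big).$$ *)

From HB Require Import structures.
From mathcomp Require Import all_boot all_order all_algebra.
From mathcomp Require Import all_classical all_reals all_analysis.
Set Implicit Arguments. Unset Strict Implicit. Unset Printing Implicit Defensive.
Import Order.TTheory GRing.Theory Num.Theory.
Local Open Scope classical_set_scope.
Local Open Scope ring_scope.

Definition ell_term (R : realType) (kappa b : R) (n : int) : \bar R :=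
  ereal_sup [set ((b / ((y + n%:~R + kappa) ^+ 2 + b ^+ 2))%:E : \bar R)
            | y in `[0, 1]%classic].

Definition ell (R : realType) (kappa b : R) : \bar R :=
  \esum_(n in [set: int]) ell_term kappa b n.

From HB Require Import structures.
From mathcomp Require Import all_boot all_order all_algebra.
From mathcomp Require Import all_classical all_reals all_analysis.
From mathcomp Require Import ring lra.
Import Order.TTheory GRing.Theory Num.Theory.
Local Open Scope classical_set_scope.
Local Open Scope ring_scope.

(* Each term of [ell] is the supremum of the Lorentzian b / (x^2 + b^2) over a
   unit interval; when n + kappa >= 0 it is attained at the left endpoint, and
   the reflection n |-> -n - 1, y |-> 1 - y turns the terms with n < 0 into the
   terms with n >= 0 at -kappa. The Lorentzian decreases on [0, +oo) and has
   primitive atan (x / b), so comparing with its integral bounds the sum over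
   n >= 0 of its values at n + k by (1 - k) / b + pi / 2 for 0 <= k <= 1, and
   peeling off one term gives the same bound for -1 <= k <= 0. Hence
   ell kappa b <= pi + 2 / b for |kappa| <= 1, which by Z-periodicity covers all
   kappa, and pi + 2 / b <= pi (1 + 1 / b) because pi >= 2. *)

Lemma esumT_int (R : realType) (f : int -> \bar R) : (forall n, 0 <= f n)%E ->
  \esum_(n in [set: int]) f n
    = (\sum_(i <oo) f (Posz i) + \sum_(i <oo) f (Negz i))%E.
Proof.
move=> f_ge0; rewrite (esumID [set n : int | 0 <= n]) //.
have bij_Posz : set_bij [set: nat] ([set: int] `&` [set n | 0 <= n]) Posz.
  split=> [n _ //|m n _ _ [] //|[n|n] [_ /= n_ge0] //]; by exists n.
have bij_Negz : set_bij [set: nat] ([set: int] `&` ~` [set n | 0 <= n]) Negz.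
  split=> [n _ //|m n _ _ [] //|[n|n] [_ /= n_lt0] //]; by exists n.
rewrite (reindex_esum _ _ _ _ bij_Posz) (reindex_esum _ _ _ _ bij_Negz).
by rewrite -!nneseries_esumT.
Qed.

Definition lorentz {R : realType} (b x : R) : R := b / (x ^+ 2 + b ^+ 2).

Section Lorentz.
Context {R : realType} {b : R}.
Hypothesis b_gt0 : 0 < b.

Lemma lorentz_ge0 (x : R) : 0 <= lorentz b x.
Proof. by rewrite /lorentz divr_ge0 ?addr_ge0 ?sqr_ge0 ?ltW. Qed.

Lemma le_lorentz (x z : R) : x ^+ 2 <= z ^+ 2 -> lorentz b z <= lorentz b x.
Proof.
move=> xz; rewrite /lorentz ler_pM2l // lef_pV2 ?lerD2r // posrE;
  by rewrite ltr_wpDl ?sqr_ge0 ?exprn_gt0.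
Qed.

Lemma lorentzN (x : R) : lorentz b (- x) = lorentz b x.
Proof. by rewrite /lorentz sqrrN. Qed.

Lemma lorentz_le_inv (x : R) : lorentz b x <= b^-1.
Proof.
have -> : b^-1 = lorentz b 0.
  by rewrite /lorentz expr0n add0r expr2 invfM mulrA divff ?gt_eqF ?mul1r.
by apply: le_lorentz; rewrite expr0n sqr_ge0.
Qed.

Lemma lorentz_le_atan (u v : R) : 0 <= u -> u <= v ->
  (v - u) * lorentz b v <= atan (v / b) - atan (u / b).
Proof.
move=> u_ge0 uv; have ub_le_vb : u / b <= v / b by rewrite ler_pM2r ?invr_gt0.
have [|c] := MVT_segment (f := atan) (df := fun x => (1 + x ^+ 2)^-1)
  ub_le_vb (fun x _ => is_derive1_atan x).
  by apply: derivable_within_continuous => x _; exact: ex_derive.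
rewrite in_itv /= => /andP[uc cv] ->.
have c_ge0 : 0 <= c := le_trans (divr_ge0 u_ge0 (ltW b_gt0)) uc.
have -> : (v - u) * lorentz b v = (1 + (v / b) ^+ 2)^-1 * (v / b - u / b).
  rewrite /lorentz; field.
  by rewrite (gt_eqF b_gt0) gt_eqF // ltr_wpDr ?sqr_ge0 ?exprn_gt0.
apply: ler_wpM2r; first by rewrite subr_ge0.
rewrite lef_pV2 ?posrE ?ltr_wpDr ?sqr_ge0 // lerD2l ler_sqr // nnegrE.
exact: le_trans c_ge0 cv.
Qed.

Lemma sum_lorentz_le_atan (k : R) (N : nat) : 0 <= k <= 1 ->
  \sum_(0 <= i < N.+1) lorentz b (i%:R + k)
    <= (1 - k) / b + atan ((N%:R + k) / b).
Proof.
move=> /andP[k_ge0 k_le1]; elim: N => [|N IH].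
  (* Split [lorentz b k] as [(1 - k) lorentz b k + k lorentz b k]; the second
     part is a right Riemann sum of the Lorentzian on [0, k]. *)
  have left_part : (1 - k) * lorentz b k <= (1 - k) / b.
    by rewrite mulrC [_ / b]mulrC ler_wpM2r ?subr_ge0 ?lorentz_le_inv.
  have := lorentz_le_atan 0 k (lexx 0) k_ge0.
  by rewrite big_nat1 !add0r mul0r atan0 !subr0 => right_part; lra.
rewrite big_nat_recr //=.
have N_le : N%:R + k <= N.+1%:R + k by rewrite lerD2r ler_nat.
have := lorentz_le_atan _ _ (addr_ge0 (ler0n R N) k_ge0) N_le.
by rewrite (_ : _ - _ = 1) ?mul1r; [lra | rewrite -natr1; ring].
Qed.

Lemma sum_lorentz_le (k : R) (N : nat) : 0 <= k <= 1 ->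
  \sum_(0 <= i < N) lorentz b (i%:R + k) <= (1 - k) / b + pi / 2.
Proof.
move=> k01; case: N => [|N].
  have : 0 <= (1 - k) / b.
    by case/andP: k01 => _ k_le1; rewrite divr_ge0 ?subr_ge0 // ltW.
  by rewrite big_geq //; have := pi_gt0 R; lra.
apply: le_trans (sum_lorentz_le_atan _ N k01) _.
by rewrite lerD2l ltW ?atan_ltpi2.
Qed.

End Lorentz.

Section Ell.
Context {R : realType} {b : R}.
Hypothesis b_gt0 : 0 < b.

Lemma ell_termE (kappa : R) (n : int) : ell_term kappa b n =
  ereal_sup [set (lorentz b (y + n%:~R + kappa))%:E
            | y in [set y : R | 0 <= y <= 1]].
Proof. by []. Qed.

Lemma ell_term_le (kappa c : R) (n : int) :
  (forall y, 0 <= y <= 1 -> lorentz b (y + n%:~R + kappa) <= c) ->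
  (ell_term kappa b n <= c%:E)%E.
Proof.
move=> le_c; apply: ge_ereal_sup => _ [y + <-].
by rewrite /= in_itv /= lee_fin => /le_c.
Qed.

Lemma ell_term_ge0 (kappa : R) (n : int) : (0 <= ell_term kappa b n)%E.
Proof.
apply: le_trans (ereal_sup_ubound _); last first.
  by exists 0; rewrite /= ?in_itv /= ?lexx ?ler01.
by rewrite lee_fin lorentz_ge0.
Qed.

Lemma ell_term_le_inv (kappa : R) (n : int) : (ell_term kappa b n <= b^-1%:E)%E.
Proof. by apply: ell_term_le => y _; exact: lorentz_le_inv. Qed.

Lemma ell_term_le_lorentz (kappa : R) (n : int) : 0 <= n%:~R + kappa ->
  (ell_term kappa b n <= (lorentz b (n%:~R + kappa))%:E)%E.
Proof.
move=> ge0; apply: ell_term_le => y /andP[y_ge0 _]; apply: le_lorentz => //.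
have z_ge0 : 0 <= y + (n%:~R + kappa) := addr_ge0 y_ge0 ge0.
by rewrite -addrA ler_sqr ?nnegrE //; lra.
Qed.

Lemma ell_termDz (kappa : R) (k n : int) :
  ell_term (kappa + k%:~R) b n = ell_term kappa b (n + k).
Proof.
rewrite !ell_termE; congr ereal_sup; congr image; apply/funext => y.
by rewrite intrD; congr (lorentz b _)%:E; ring.
Qed.

Lemma ell_term_Negz (kappa : R) (i : nat) :
  ell_term kappa b (Negz i) = ell_term (- kappa) b i.
Proof.
have flip (y : R) :
    lorentz b (y + (Negz i)%:~R + kappa) = lorentz b (1 - y + i%:R - kappa).
  by rewrite -lorentzN NegzE intrN -pmulrn -natr1; congr lorentz; ring.
rewrite !ell_termE; congr ereal_sup; apply/seteqP.
split=> _ [y /= /andP[y_ge0 y_le1] <-]; exists (1 - y);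
  do ?[by apply/andP; split; lra].
- by rewrite flip.
- by rewrite flip subKr.
Qed.

Lemma sum_ell_term_le_lorentz (k : R) (N : nat) : 0 <= k ->
  (\sum_(0 <= i < N) ell_term k b i
    <= (\sum_(0 <= i < N) lorentz b (i%:R + k))%:E)%E.
Proof.
move=> k_ge0; rewrite -sumEFin; apply: lee_sum => i _.
by apply: ell_term_le_lorentz; rewrite addr_ge0.
Qed.

Lemma sum_ell_term_le (k : R) (N : nat) : -1 <= k <= 1 ->
  (\sum_(0 <= i < N) ell_term k b i <= ((1 - k) / b + pi / 2)%:E)%E.
Proof.
have nonneg (k' : R) (N' : nat) : 0 <= k' <= 1 ->
    (\sum_(0 <= i < N') ell_term k' b i <= ((1 - k') / b + pi / 2)%:E)%E.
  move=> k'01; case/andP: (k'01) => k'_ge0 _.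
  apply: le_trans (sum_ell_term_le_lorentz k' N' k'_ge0) _.
  by rewrite lee_fin sum_lorentz_le.
case/andP=> k_ge_m1 k_le1; have [k_ge0|k_lt0] := leP 0 k.
  by apply: nonneg; rewrite k_ge0.
(* For k < 0 the first term is only bounded by 1/b, the rest is the k + 1 sum. *)
case: N => [|N].
  rewrite big_geq // lee_fin.
  by rewrite addr_ge0 ?divr_ge0 ?subr_ge0 ?(ltW b_gt0) ?(ltW (pi_gt0 R)).
rewrite big_nat_recl //.
have shift (i : nat) : ell_term k b i.+1 = ell_term (k + 1) b i.
  by rewrite -addn1 PoszD -ell_termDz.
under eq_bigr do rewrite shift.
have k1_01 : 0 <= k + 1 <= 1 by apply/andP; split; lra.
apply: le_trans (leeD (ell_term_le_inv k 0) (nonneg _ N k1_01)) _.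
rewrite -EFinD.
suff -> : b^-1 + ((1 - (k + 1)) / b + pi / 2) = (1 - k) / b + pi / 2 by [].
by field; exact: lt0r_neq0.
Qed.

Lemma nneseries_ell_term_le (k : R) : -1 <= k <= 1 ->
  (\sum_(i <oo) ell_term k b i <= ((1 - k) / b + pi / 2)%:E)%E.
Proof.
move=> k11; apply: lime_le; last by apply: nearW => N; exact: sum_ell_term_le.
by apply: is_cvg_nneseries => i _ _; exact: ell_term_ge0.
Qed.

Lemma ellDz (kappa : R) (k : int) : ell (kappa + k%:~R) b = ell kappa b.
Proof.
have bij : set_bij [set: int] [set: int] (fun n => n + k).
  by split=> [//|m n _ _ /addIr //|n _]; exists (n - k); rewrite ?subrK.
rewrite /ell (eq_esum (fun n _ => ell_termDz kappa k n)).
by rewrite [RHS](reindex_esum _ _ _ _ bij).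
Qed.

Lemma ellE (kappa : R) : ell kappa b =
  (\sum_(i <oo) ell_term kappa b i + \sum_(i <oo) ell_term (- kappa) b i)%E.
Proof.
rewrite /ell esumT_int; last exact: ell_term_ge0.
by congr (_ + _)%E; apply: eq_eseriesr => i _; exact: ell_term_Negz.
Qed.

Lemma ell_le (kappa : R) : -1 <= kappa <= 1 -> (ell kappa b <= (pi + 2 / b)%:E)%E.
Proof.
move=> k11; have mk11 : -1 <= - kappa <= 1.
  by case/andP: k11 => k_ge_m1 k_le1; apply/andP; split; lra.
rewrite ellE; apply: le_trans
  (leeD (nneseries_ell_term_le _ k11) (nneseries_ell_term_le _ mk11)) _.
rewrite -EFinD.
suff -> : (1 - kappa) / b + pi / 2 + ((1 - - kappa) / b + pi / 2) = pi + 2 / b.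
  by [].
by field; exact: lt0r_neq0.
Qed.

End Ell.

Theorem lemma3p2 (R : realType) (b : R) (hb : 0 < b) :
  (forall kappa : R, ell (kappa + 1) b = ell kappa b) /\
  (ereal_sup [set ell kappa b | kappa in [set: R]]
     <= (pi * (1 + b^-1))%:E)%E.
Proof.
split=> [kappa|]; first exact: (ellDz kappa 1).
apply: ge_ereal_sup => _ [kappa _ <-].
set m := Num.floor kappa.
rewrite -(subrK m%:~R kappa) ellDz.
have frac01 : -1 <= kappa - m%:~R <= 1.
  have := Num.Theory.floor_le kappa; have := Num.Theory.floorD1_gt kappa.
  rewrite intrD => ? ?; apply/andP; split; lra.
apply: le_trans (ell_le hb _ frac01) _.
rewrite lee_fin mulrDr mulr1 lerD2l ler_pM2r ?invr_gt0 //.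
exact: pi_ge2.
Qed.
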